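(* Let $R$ be a commutative ring, $\vartheta$ any one of the four types (left, right, pre-two-sided, two-sided), and $\mathcal A$ an $R$-algebra which is integral over $R$ and in which every element is either invertible or nilpotent. Then $\mathcal A$ is a $\vartheta$-quasi-stable $R$-algebra.
   Context: Algebras are associative and unital. $\mathcal A$ is integral over $R$ if every element is a root of a monic polynomial with coefficients in $R$. An $R$-submodule $V$ of $\mathcal A$ is a left (resp. right) Mathieu subspace if whenever $a^m\in V$ for all $m\ge1$, then for every $b\in\mathcal A$, $ba^m\in V$ (resp. $a^mb\in V$) for all sufficiently large $m$; pre-two-sided if both left and right; two-sided if whenever $a^m\in V$ for all $m\ge1$, for all $b,c\in\mathcal A$, $ba^mc\in V$ for all sufficiently large $m$. $\mathcal A$ is $\vartheta$-quasi-stable if every $R$-submodule $V$ of $\mathcal A$ with $1\notin V$ is a $\vartheta$-Mathieu subspace of $\mathcal A$. *)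

From HB Require Import structures.
From mathcomp Require Import all_boot all_order all_algebra.
Set Implicit Arguments. Unset Strict Implicit. Unset Printing Implicit Defensive.
Import GRing.Theory.
Local Open Scope ring_scope.

Definition integral_elt (R : comNzRingType) (A : algType R) (a : A) : Prop :=
  exists p : {poly R}, p \is monic /\ \sum_(i < size p) p`_i *: a ^+ i = 0.

Definition integral_alg (R : comNzRingType) (A : algType R) : Prop :=
  forall a : A, integral_elt a.

Definition invertible (A : nzRingType) (a : A) : Prop :=
  exists b : A, a * b = 1 /\ b * a = 1.

Definition nilpotent (A : nzRingType) (a : A) : Prop :=
  exists n : nat, a ^+ n = 0.

Definition is_submodule (R : comNzRingType) (A : algType R) (V : A -> Prop) : Prop :=
  [/\ V 0, (forall x y, V x -> V y -> V (x + y)) & (forall (r : R) x, V x -> V (r *: x))].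

Inductive mtype := MLeft | MRight | MPreTwo | MTwo.

Definition left_mathieu (A : nzRingType) (V : A -> Prop) : Prop :=
  forall a : A, (forall m, (1 <= m)%N -> V (a ^+ m)) ->
    forall b : A, exists N, forall m, (N <= m)%N -> V (b * a ^+ m).

Definition right_mathieu (A : nzRingType) (V : A -> Prop) : Prop :=
  forall a : A, (forall m, (1 <= m)%N -> V (a ^+ m)) ->
    forall b : A, exists N, forall m, (N <= m)%N -> V (a ^+ m * b).

Definition twosided_mathieu (A : nzRingType) (V : A -> Prop) : Prop :=
  forall a : A, (forall m, (1 <= m)%N -> V (a ^+ m)) ->
    forall b c : A, exists N, forall m, (N <= m)%N -> V (b * a ^+ m * c).

Definition mathieu (t : mtype) (A : nzRingType) (V : A -> Prop) : Prop :=
  match t with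
  | MLeft => left_mathieu V
  | MRight => right_mathieu V
  | MPreTwo => left_mathieu V /\ right_mathieu V
  | MTwo => twosided_mathieu V
  end.

Definition quasi_stable (t : mtype) (R : comNzRingType) (A : algType R) : Prop :=
  forall V : A -> Prop, is_submodule V -> ~ V 1 -> mathieu t V.

From mathcomp Require Import all_boot all_order all_algebra.
Import GRing.Theory.
Local Open Scope ring_scope.

(* If all positive powers of [a] lie in [V], then [a] is nilpotent or a unit.
   A nilpotent [a] makes [b a^m c] vanish, hence lie in [V], for large [m].
   A unit [a] is excluded: multiplying a monic equation of degree [e + 1]
   for [a^-1] by [a^e] writes [1] as an R-linear combination of
   [a, ..., a^e], which would put [1] in [V]. *)

Section UnitPowers.
Set Implicit Arguments. Unset Strict Implicit.
Variables (R : comNzRingType) (A : algType R).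

Lemma monic_root_inv_expansion (a b : A) (q : {poly R}) :
  a * b = 1 -> b * a = 1 -> q \is monic ->
  \sum_(i < size q) q`_i *: b ^+ i = 0 ->
  1 = - \sum_(i < (size q).-1) q`_i *: a ^+ ((size q).-1 - i).
Proof.
move=> ab ba mq qb0; set e := (size q).-1.
have size_q : size q = e.+1 by rewrite /e prednK // size_poly_gt0 monic_neq0.
have lead_q : q`_e = 1 by move/monicP: mq; rewrite /lead_coef size_q.
have ae_bi i : (i <= e)%N -> a ^+ e * b ^+ i = a ^+ (e - i).
  have cab : GRing.comm a b by rewrite /GRing.comm ab ba.
  move=> le_ie; rewrite -{1}(subnK le_ie) exprD -mulrA -exprMn_comm //.
  by rewrite ab expr1n mulr1.
have := congr1 (GRing.mul (a ^+ e)) qb0.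
rewrite mulr0 mulr_sumr size_q big_ord_recr /= -scalerAr ae_bi // subnn.
rewrite lead_q scale1r expr0 => /eqP; rewrite addr_eq0 => /eqP sum_eq.
rewrite -[LHS]opprK -sum_eq; congr (- _); apply: eq_bigr => i _.
by rewrite -scalerAr ae_bi // ltnW.
Qed.

Lemma submodule_one_of_unit_powers (V : A -> Prop) (a b : A) :
  is_submodule V -> a * b = 1 -> b * a = 1 -> integral_elt b ->
  (forall m, (1 <= m)%N -> V (a ^+ m)) -> V 1.
Proof.
move=> [V0 VD VZ] ab ba [q [mq qb0]] Va.
rewrite (monic_root_inv_expansion ab ba mq qb0) -[- _]scaleN1r; apply: (VZ).
apply: (big_ind V) => // i _; apply: VZ; apply: Va.
by rewrite subn_gt0 ltn_ord.
Qed.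

End UnitPowers.

Lemma expr_eq0_ge (A : nzRingType) (a : A) (n m : nat) :
  a ^+ n = 0 -> (n <= m)%N -> a ^+ m = 0.
Proof. by move=> an0 le_nm; rewrite -(subnK le_nm) exprD an0 mulr0. Qed.

Lemma mathieu_of_powers_eventually0 (t : mtype) (A : nzRingType)
    (V : A -> Prop) :
  V 0 ->
  (forall a : A, (forall m, (1 <= m)%N -> V (a ^+ m)) ->
     exists N, forall m, (N <= m)%N -> a ^+ m = 0) ->
  mathieu t V.
Proof.
move=> V0 ev0.
have vanish_left a : (forall m, (1 <= m)%N -> V (a ^+ m)) ->
    forall b, exists N, forall m, (N <= m)%N -> V (b * a ^+ m).
  by move=> /ev0[N aN0] b; exists N => m le_Nm; rewrite aN0 // mulr0.
have vanish_right a : (forall m, (1 <= m)%N -> V (a ^+ m)) ->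
    forall b, exists N, forall m, (N <= m)%N -> V (a ^+ m * b).
  by move=> /ev0[N aN0] b; exists N => m le_Nm; rewrite aN0 // mul0r.
case: t => //=.
move=> a /ev0[N aN0] b c; exists N => m le_Nm.
by rewrite aN0 // mulr0 mul0r.
Qed.

Theorem proposition7p4 (R : comNzRingType) (t : mtype) (A : algType R) :
  integral_alg A ->
  (forall a : A, invertible a \/ nilpotent a) ->
  quasi_stable t A.
Proof.
move=> intA unit_or_nil V subV notV1.
apply: mathieu_of_powers_eventually0; first by case: subV.
move=> a Va; case: (unit_or_nil a) => [[b [ab ba]] | [n an0]].
  by case: notV1; exact: submodule_one_of_unit_powers subV ab ba (intA b) Va.
by exists n => m; apply: expr_eq0_ge.
Qed.
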